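(* Let $V^1$ and $V^2$ be vertex algebras and $f:V^1\to V^2$ a homomorphism of vertex algebras. If $M$ is an $MZ_{0,-1}$-subspace of $V^2$, then $f^{-1}(M)$ is an $MZ_{0,-1}$-subspace of $V^1$.
   Context: Vertex algebras are over $\mathbb{C}$; for $u\in V$ write $Y(u,z)=\sum_{n\in\mathbb{Z}}u_nz^{-n-1}$ with $u_n\in\operatorname{End}V$. A homomorphism $f:V^1\to V^2$ is a linear map with $f(u_nv)=f(u)_nf(v)$ for all $u,v\in V^1$, $n\in\mathbb{Z}$, and $f(\mathbf{1})=\mathbf{1}$. Iterated products are nested to the right: $v_{n_1}\cdots v_{n_t}v=v_{n_1}(\cdots(v_{n_t}v))$. For a subspace $M\subseteq V$: $r_{0,-1}(M)$ is the set of $v\in V$ for which there is $m\ge 0$ with $v_{n_1}\cdots v_{n_t}v\in M$ for all $t\ge m$ and all $n_1,\dots,n_t\in\{0,-1\}$. $lsr_{0,-1}(M)$ is the set of $v\in V$ such that for every $b\in V$ there is $m\ge0$ with $b_sv_{n_1}\cdots v_{n_t}v\in M$ for all $t\ge m$ and all $s,n_1,\dots,n_t\in\{0,-1\}$. $rsr_{0,-1}(M)$ is the set of $v\in V$ such that for every $w\in V$ there is $m\ge 0$ with $(v_{n_1}\cdots v_{n_t}v)_nw\in M$ for all $t\ge m$ and all $n,n_1,\dots,n_t\in\{0,-1\}$. $sr_{0,-1}(M)=lsr_{0,-1}(M)\cap rsr_{0,-1}(M)$. $M$ is an $MZ_{0,-1}$-subspace of $V$ if $r_{0,-1}(M)=sr_{0,-1}(M)$.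 *)

From HB Require Import structures.
From mathcomp Require Import all_boot all_order all_algebra.
From mathcomp Require Import complex.
From mathcomp Require Import reals.
Set Implicit Arguments. Unset Strict Implicit. Unset Printing Implicit Defensive.
Import Order.TTheory GRing.Theory Num.Theory.
Local Open Scope ring_scope.

Section VA.
Variable R : realType.
Definition CC := R[i].

Definition gbinom (r : int) (i : nat) : CC :=
  (\prod_(k < i) ((r - (k : nat)%:Z)%:~R : CC)) / (i`!)%:R.

(* A vertex algebra structure on the C-vector space V (Lepowsky--Li Def. 3.1.1,
   Jacobi identity written componentwise as the Borcherds identity).
   vmul u n v stands for u_n v. *)
Record vertex_algebra (V : lmodType CC) := VertexAlgebra {
  vmul : V -> int -> V -> V;
  vac : V;
  vmul_linl : forall (a : CC) u u' n v,
      vmul (a *: u + u') n v = a *: vmul u n v + vmul u' n v;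
  vmul_linr : forall (a : CC) u n v v',
      vmul u n (a *: v + v') = a *: vmul u n v + vmul u n v';
  vmul_trunc : forall u v, exists N : int, forall n : int, N <= n -> vmul u n v = 0;
  vac_vmul : forall n v, vmul vac n v = (if n == -1 then v else 0);
  vmul_vac_ge0 : forall u (n : int), 0 <= n -> vmul u n vac = 0;
  vmul_vac_m1 : forall u, vmul u (-1) vac = u;
  borcherds : forall u v w (p q r : int), exists N : nat, forall N' : nat, (N <= N')%N ->
      \sum_(i < N') gbinom p i *: vmul (vmul u (r + i%:Z) v) (p + q - i%:Z) w =
      \sum_(i < N') ((-1) ^+ i * gbinom r i) *:
          (vmul u (p + r - i%:Z) (vmul v (q + i%:Z) w)
           - (-1) ^ r *: vmul v (q + r - i%:Z) (vmul u (p + i%:Z) w))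
}.

Variables (V : lmodType CC) (A : vertex_algebra V).

Definition is_subspace (M : V -> Prop) : Prop :=
  M 0 /\ forall (a : CC) x y, M x -> M y -> M (a *: x + y).

(* v_{n1} ... v_{nt} x, nested to the right, for ns = [:: n1; ...; nt] *)
Definition iter_prod (v : V) (ns : seq int) (x : V) : V :=
  foldr (fun n acc => vmul A v n acc) x ns.

Definition in01 (ns : seq int) : bool := all (fun n => (n == 0) || (n == -1)) ns.

Definition r01 (M : V -> Prop) (v : V) : Prop :=
  exists m : nat, forall ns, (m <= size ns)%N -> in01 ns -> M (iter_prod v ns v).

Definition lsr01 (M : V -> Prop) (v : V) : Prop :=
  forall b : V, exists m : nat, forall (s : int) ns,
    (s == 0) || (s == -1) -> (m <= size ns)%N -> in01 ns ->
    M (vmul A b s (iter_prod v ns v)).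

Definition rsr01 (M : V -> Prop) (v : V) : Prop :=
  forall w : V, exists m : nat, forall (n : int) ns,
    (n == 0) || (n == -1) -> (m <= size ns)%N -> in01 ns ->
    M (vmul A (iter_prod v ns v) n w).

Definition sr01 (M : V -> Prop) (v : V) : Prop := lsr01 M v /\ rsr01 M v.

Definition MZ01_subspace (M : V -> Prop) : Prop :=
  is_subspace M /\ forall v, r01 M v <-> sr01 M v.

End VA.

Definition va_hom (R : realType) (V1 V2 : lmodType (CC R))
  (A1 : vertex_algebra V1) (A2 : vertex_algebra V2) (f : V1 -> V2) : Prop :=
  (forall (a : CC R) x y, f (a *: x + y) = a *: f x + f y) /\
  (forall u n v, f (vmul A1 u n v) = vmul A2 (f u) n (f v)) /\
  f (vac A1) = vac A2.

From mathcomp Require Import all_boot all_algebra complex reals.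
Set Implicit Arguments. Unset Strict Implicit. Unset Printing Implicit Defensive.
Import GRing.Theory.
Local Open Scope ring_scope.

(* Since [sr01 N v] always implies [r01 N v] (take [b] the vacuum and [s = -1]),
   only [r01 -> sr01] needs proof for the preimage.  A homomorphism carries
   iterated products of [v] to those of [f v], so [r01 (M \o f) v] is
   [r01 M (f v)]; the MZ property of [M] gives [sr01 M (f v)], and testing it
   against elements [f b], [f w] of the image yields [sr01 (M \o f) v]. *)

Section AnyVertexAlgebra.
Variables (R : realType) (V : lmodType (CC R)) (A : vertex_algebra V).

Lemma lsr01_r01 (N : V -> Prop) (v : V) : lsr01 A N v -> r01 A N v.
Proof.
move=> /(_ (vac A)) [m Nm]; exists m => ns size_ns ns01.
by have := Nm (-1) ns (orbT _) size_ns ns01; rewrite vac_vmul eqxx.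
Qed.

Lemma sr01_r01 (N : V -> Prop) (v : V) : sr01 A N v -> r01 A N v.
Proof. by move=> [/lsr01_r01]. Qed.

End AnyVertexAlgebra.

Section Preimage.
Variables (R : realType) (V1 V2 : lmodType (CC R)).
Variables (A1 : vertex_algebra V1) (A2 : vertex_algebra V2) (f : V1 -> V2).
Hypothesis hom_f : va_hom A1 A2 f.
Variable M : V2 -> Prop.

Lemma va_hom0 : f 0 = 0.
Proof.
have [f_lin _] := hom_f.
have -> : (0 : V1) = (-1) *: 0 + 0 by rewrite scaler0 addr0.
by rewrite f_lin scaleN1r addNr.
Qed.

Lemma is_subspace_preimage : is_subspace M -> is_subspace (fun x => M (f x)).
Proof.
have [f_lin _] := hom_f.
move=> [M0 MD]; split; first by rewrite /= va_hom0.
by move=> a x y Mx My; rewrite /= f_lin; apply: MD.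
Qed.

Lemma iter_prod_hom (v : V1) (ns : seq int) (x : V1) :
  f (iter_prod A1 v ns x) = iter_prod A2 (f v) ns (f x).
Proof.
have [_ [f_mul _]] := hom_f.
by elim: ns => [|n ns IH] //=; rewrite f_mul IH.
Qed.

Lemma r01_preimage (v : V1) : r01 A1 (fun x => M (f x)) v <-> r01 A2 M (f v).
Proof.
by split=> -[m Mm]; exists m => ns size_ns ns01;
  have := Mm ns size_ns ns01; rewrite /= iter_prod_hom.
Qed.

Lemma lsr01_preimage (v : V1) : lsr01 A2 M (f v) -> lsr01 A1 (fun x => M (f x)) v.
Proof.
have [_ [f_mul _]] := hom_f.
move=> lsr_fv b; have [m Mm] := lsr_fv (f b); exists m => s ns s01 size_ns ns01.
by rewrite /= f_mul iter_prod_hom; apply: Mm.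
Qed.

Lemma rsr01_preimage (v : V1) : rsr01 A2 M (f v) -> rsr01 A1 (fun x => M (f x)) v.
Proof.
have [_ [f_mul _]] := hom_f.
move=> rsr_fv w; have [m Mm] := rsr_fv (f w); exists m => n ns n01 size_ns ns01.
by rewrite /= f_mul iter_prod_hom; apply: Mm.
Qed.

End Preimage.

Theorem mainTheorem6 (R : realType) (V1 V2 : lmodType (CC R))
  (A1 : vertex_algebra V1) (A2 : vertex_algebra V2) (f : V1 -> V2)
  (M : V2 -> Prop) :
  va_hom A1 A2 f -> MZ01_subspace A2 M ->
  MZ01_subspace A1 (fun x => M (f x)).
Proof.
move=> hom_f [subM MZ_M]; split; first exact: (is_subspace_preimage hom_f subM).
move=> v; split; last exact: sr01_r01.
move=> /(r01_preimage hom_f) /MZ_M [lsr_fv rsr_fv].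
by split; [exact: (lsr01_preimage hom_f) | exact: (rsr01_preimage hom_f)].
Qed.
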